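(* Let $w$ and $q$ be probability measures on $(\mathsf{Y},\mathcal{Y})$ with $D_\lambda(w\|q)\le\gamma$ for some $\gamma\in\mathbb{R}_+$ and $\lambda\in(1,\infty)$. Then for any $\eta\in(1,\lambda)$, $$0\le D_\eta(w\|q)-D_1(w\|q)\le\frac{2(\eta-1)}{e^2}\Big[1+e^{(\eta-1)\gamma}\Big(\frac{\gamma e^\tau}{2\tau}\Big)^2\Big],\qquad\tau=\frac{(\lambda-\eta)\gamma}{2}\wedge1.$$
   Context: Rényi divergence $D_\alpha(w\|q)=\frac{1}{\alpha-1}\ln E_\nu[(\frac{dw}{d\nu})^\alpha(\frac{dq}{d\nu})^{1-\alpha}]$ for $\alpha\in(0,\infty)\setminus\{1\}$ and $D_1(w\|q)=E_\nu[\frac{dw}{d\nu}\ln\frac{dw/d\nu}{dq/d\nu}]$, $\nu$ any dominating probability measure. *)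

From HB Require Import structures.
From mathcomp Require Import all_boot all_order all_algebra.
From mathcomp Require Import all_classical all_reals all_analysis.
Set Implicit Arguments. Unset Strict Implicit. Unset Printing Implicit Defensive.
Import Order.TTheory GRing.Theory Num.Theory.
Local Open Scope ring_scope.
Local Open Scope ereal_scope.

(* Rényi divergence expressed through densities f = dw/dnu, g = dq/dnu
   with respect to a dominating probability measure nu. *)
Section Renyi.
Context {d : measure_display} {Y : measurableType d} {R : realType}.

Definition eln (x : \bar R) : \bar R :=
  match x with
  | EFin r => if r == 0%R then -oo else (ln r)%:E
  | +oo => +oo
  | -oo => -oo
  end.

Definition renyi_integrand (a : R) (f g : Y -> R) (x : Y) : \bar R :=
  if [&& g x == 0%R, f x != 0%R & (1 < a)%R] then +oo
  else ((f x `^ a) * (g x `^ (1 - a)))%:E.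

Definition kl_integrand (f g : Y -> R) (x : Y) : \bar R :=
  if f x == 0%R then 0
  else if g x == 0%R then +oo
  else (f x * ln (f x / g x))%:E.

Definition renyi_div (nu : {measure set Y -> \bar R}) (f g : Y -> R) (a : R)
  : \bar R :=
  if a == 1%R then \int[nu]_x kl_integrand f g x
  else ((a - 1)^-1)%:E * eln (\int[nu]_x renyi_integrand a f g x).

Definition is_density (mu nu : {measure set Y -> \bar R}) (f : Y -> R) :=
  [/\ measurable_fun setT f, (forall x, (0 <= f x)%R) &
      forall A, measurable A -> mu A = \int[nu]_(x in A) (f x)%:E].

End Renyi.

From HB Require Import structures.
From mathcomp Require Import all_boot all_order all_algebra.
From mathcomp Require Import all_classical all_reals all_analysis.
From mathcomp Require Import measurable_realfun.
From mathcomp Require Import ring lra.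
Import Order.TTheory GRing.Theory Num.Theory.
Local Open Scope ring_scope.

(* Write z = ln (f / g) where f, g > 0.  Then the Rényi integrand of order a is
   f e^((a-1) z), the Kullback-Leibler integrand is f z and g = f e^(-z), so every
   estimate below is an elementary inequality between exponentials in z, multiplied
   by f and integrated against nu (points where f = 0 or g = 0 are checked apart).
   Convexity of exp interpolates e^((a-1) z) between 1 and e^((lambda-1) z), so
   D_lambda <= gamma gives D_a <= gamma for 1 < a <= lambda.  The tangent of exp at
   (eta-1) D_1 gives Jensen's inequality e^((eta-1) D_1) <= e^((eta-1) D_eta), the
   lower bound.  For the upper bound, ln b <= b - 1 reduces D_eta - D_1 to the
   integral of f (e^(s z) - 1 - s z) / s, s = eta - 1.  The second-order remainder
   (s z)^2 / 2 * max(1, e^(s z)) is absorbed by e^(-z) where z < 0 (this integrates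
   to int g = 1) and by e^(v z), v = 2 tau / gamma, where z >= 0 (this integrates to
   at most e^((s+v) gamma), as s + v <= lambda - 1), using y^2 <= (2/(v e))^2 e^(v y). *)

Section exp_inequalities.
Context {R : realType}.
Implicit Types (a s t u v x y z : R).

Lemma ler_wpM2l_sub a x y u v :
  0 <= a -> x <= y -> u - v = a * x - a * y -> u <= v.
Proof. by move=> a0 xy e; rewrite -subr_le0 e subr_le0 ler_wpM2l. Qed.

Lemma expR_convex t x y : 0 <= t <= 1 ->
  expR (t * x + (1 - t) * y) <= t * expR x + (1 - t) * expR y.
Proof. by case/andP=> t0 t1; have := convex_expR (Itv01 t0 t1) x y. Qed.

Lemma le_expR_sub1 x : x <= expR (x - 1).
Proof. by have := expR_ge1Dx (x - 1); lra. Qed.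

Lemma sqr_le_expR v y : 0 < v -> 0 <= y ->
  y ^+ 2 <= (2 / (v * expR 1)) ^+ 2 * expR (v * y).
Proof.
move=> v0 y0.
have u0 : 0 <= v * y / 2 by rewrite divr_ge0 // mulr_ge0 // ltW.
have hu : (v * y / 2) ^+ 2 <= expR (v * y / 2 - 1) ^+ 2.
  by apply: lerXn2r; rewrite ?nnegrE ?expR_ge0 ?le_expR_sub1.
have -> : expR (v * y) = expR (v * y / 2 - 1) ^+ 2 * expR 1 ^+ 2.
  by rewrite -!expRM_natr -expRD; congr expR; rewrite !mulr_natr !mulr2n; field.
have -> : (2 / (v * expR 1)) ^+ 2 * (expR (v * y / 2 - 1) ^+ 2 * expR 1 ^+ 2)
    = (2 / v) ^+ 2 * expR (v * y / 2 - 1) ^+ 2.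
  by field; rewrite !gt_eqF ?expR_gt0.
have -> : y ^+ 2 = (2 / v) ^+ 2 * (v * y / 2) ^+ 2 by field; rewrite gt_eqF.
by rewrite ler_wpM2l ?sqr_ge0.
Qed.

Lemma expR_le_taylor2_neg y : y <= 0 -> expR y <= 1 + y + y ^+ 2 / 2.
Proof.
rewrite le_eqVlt => /predU1P[->|y0]; first by rewrite expR0; lra.
pose h t := expR t - t - t ^+ 2 / 2.
have dh t : is_derive t 1 h (expR t - 1 - t).
  by apply: is_derive_eq; rewrite !scaler0 add0r /GRing.scale /= !mulr1; field.
have [c _ hc] := @MVT R h (fun t => expR t - 1 - t) y 0 y0 (fun t _ => dh t)
  (derivable_within_continuous (fun t _ => @ex_derive _ _ _ _ _ _ _ (dh t))).
have : 0 <= (expR c - 1 - c) * (0 - y) by rewrite mulr_ge0 //; have := expR_ge1Dx c; lra.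
by rewrite -hc /h expR0; lra.
Qed.

Lemma expR_le_taylor2_pos y : 0 <= y -> expR y <= 1 + y + y ^+ 2 / 2 * expR y.
Proof.
rewrite le_eqVlt => /predU1P[<-|y0]; first by rewrite expR0; lra.
pose h t := expR t - t - t ^+ 2 / 2 * expR t.
have dh t : is_derive t 1 h (expR t - 1 - (t ^+ 2 / 2 * expR t + t * expR t)).
  by apply: is_derive_eq; rewrite !scaler0 /GRing.scale /= !mulr1; field.
have [c /[!in_itv] /= /andP[c0 _] hc] := @MVT R h _ 0 y y0 (fun t _ => dh t)
  (derivable_within_continuous (fun t _ => @ex_derive _ _ _ _ _ _ _ (dh t))).
have : (expR c - 1 - (c ^+ 2 / 2 * expR c + c * expR c)) * (y - 0) <= 0.
  apply: mulr_le0_ge0; last lra.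
  have := expR_ge1Dx (- c); have := expRxMexpNx_1 c; have := expR_gt0 c; nra.
by rewrite -hc /h expR0; lra.
Qed.

Lemma expR_tangent_gap_le s v z : 0 <= s -> 0 < v ->
  expR (s * z) - 1 - s * z <=
  2 * s ^+ 2 / expR 2 * expR (- z)
  + s ^+ 2 / 2 * (2 / (v * expR 1)) ^+ 2 * expR ((s + v) * z).
Proof.
move=> s0 v0.
have s20 : 0 <= s ^+ 2 / 2 by rewrite divr_ge0 ?sqr_ge0.
have A0 : 0 <= 2 * s ^+ 2 / expR 2 * expR (- z).
  by rewrite mulr_ge0 ?expR_ge0 // divr_ge0 ?expR_ge0 // mulr_ge0 ?sqr_ge0.
have C0 : 0 <= s ^+ 2 / 2 * (2 / (v * expR 1)) ^+ 2 * expR ((s + v) * z).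
  by rewrite mulr_ge0 ?expR_ge0 // mulr_ge0 ?sqr_ge0.
have [z0|z0] := ltP z 0.
- have ht := expR_le_taylor2_neg _ (mulr_ge0_le0 s0 (ltW z0)).
  have : (s * z) ^+ 2 / 2 <= 2 * s ^+ 2 / expR 2 * expR (- z).
    have := sqr_le_expR _ (- z) ltr01 _; rewrite !mul1r sqrrN => hq.
    rewrite (_ : (s * z) ^+ 2 / 2 = s ^+ 2 / 2 * z ^+ 2); last by ring.
    rewrite (_ : 2 * s ^+ 2 / expR 2 * expR (- z) =
      s ^+ 2 / 2 * ((2 / expR 1) ^+ 2 * expR (- z))); last first.
      have e2 : expR 2 = expR 1 ^+ 2 :> R by rewrite -expRM_natr mul1r.
      by rewrite e2; field; rewrite gt_eqF ?expR_gt0.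
    by rewrite ler_wpM2l // hq // oppr_ge0 ltW.
  lra.
- have ht := expR_le_taylor2_pos _ (mulr_ge0 s0 z0).
  have : (s * z) ^+ 2 / 2 * expR (s * z) <=
         s ^+ 2 / 2 * (2 / (v * expR 1)) ^+ 2 * expR ((s + v) * z).
    have hq := sqr_le_expR _ _ v0 z0.
    rewrite (mulrDl s v z) expRD (_ : (s * z) ^+ 2 / 2 * expR (s * z) =
      s ^+ 2 / 2 * expR (s * z) * z ^+ 2); last by ring.
    rewrite (_ : s ^+ 2 / 2 * (2 / (v * expR 1)) ^+ 2 * (expR (s * z) * expR (v * z)) =
      s ^+ 2 / 2 * expR (s * z) *
      ((2 / (v * expR 1)) ^+ 2 * expR (v * z))); last by ring.
    by rewrite ler_wpM2l // mulr_ge0 ?expR_ge0.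
  lra.
Qed.

Definition renyi_gap_bound (gamma lambda eta : R) : R :=
  let tau := Num.min (((lambda - eta) * gamma) / 2) 1 in
  2 * (eta - 1) / expR 2 *
  (1 + expR ((eta - 1) * gamma) * ((gamma * expR tau) / (2 * tau)) ^+ 2).

Lemma renyi_gap_bound_ge0 gamma lambda eta : 1 <= eta ->
  0 <= renyi_gap_bound gamma lambda eta.
Proof.
move=> eta1; apply: mulr_ge0; first by rewrite divr_ge0 ?expR_ge0 // mulr_ge0 // subr_ge0.
by rewrite addr_ge0 // mulr_ge0 ?expR_ge0 ?sqr_ge0.
Qed.

End exp_inequalities.

Arguments ler_wpM2l_sub {R a x y u v}.

Section weighted_sums.
Context {d : measure_display} {Y : measurableType d} {R : realType}.
Local Open Scope ereal_scope.

Definition nonneg_measurable (h : Y -> \bar R) :=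
  (forall x, 0 <= h x) /\ measurable_fun setT h.

Definition wsum (l : seq (R * (Y -> \bar R))) (x : Y) : \bar R :=
  \sum_(p <- l) p.1%:E * p.2 x.

Definition nonneg_terms (l : seq (R * (Y -> \bar R))) :=
  forall c h, List.In (c, h) l -> (0 <= c)%R /\ nonneg_measurable h.

Lemma nonneg_terms_consE c h l :
  nonneg_terms ((c, h) :: l) -> [/\ (0 <= c)%R, nonneg_measurable h & nonneg_terms l].
Proof.
move=> hl; have [c0 hh] := hl c h (or_introl erefl).
by split=> // c' h' hin; apply: hl; right.
Qed.

Lemma nonneg_terms_nil : nonneg_terms [::].
Proof. by []. Qed.

Lemma nonneg_terms_consI c h l : nonneg_measurable h -> nonneg_terms l -> (0 <= c)%R ->
  nonneg_terms ((c, h) :: l).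
Proof. by move=> hh hl c0 c' h' /= [[<- <-]|/hl]. Qed.

Lemma nonneg_measurable_wsum l : nonneg_terms l -> nonneg_measurable (wsum l).
Proof.
rewrite /wsum; elim: l => [_|[c h] l IH /nonneg_terms_consE[c0 [h0 mh] /IH[s0 ms]]].
  split=> [x|]; first by rewrite big_nil.
  by under eq_fun do rewrite big_nil; exact: measurable_cst.
split=> [x|]; first by rewrite big_cons adde_ge0 ?mule_ge0.
under eq_fun do rewrite big_cons.
by apply: emeasurable_funD => //; exact: measurable_funeM.
Qed.

Lemma wsum_eq_pinfty l c h x : nonneg_terms l -> List.In (c, h) l ->
  (0 < c)%R -> h x = +oo -> wsum l x = +oo.
Proof.
have ge0_Ny (y : \bar R) : 0 <= y -> y != -oo by rewrite -ltNye; apply: lt_le_trans.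
rewrite /wsum; elim: l => // -[c' h'] l IH /nonneg_terms_consE[c'0 [h'0 _] hl].
rewrite big_cons => -[[<- <-] c0 hx|hin c0 hx] /=.
  rewrite hx gt0_muley ?lte_fin // addye //.
  exact: ge0_Ny ((nonneg_measurable_wsum _ hl).1 x).
by rewrite IH // addey // ge0_Ny ?mule_ge0.
Qed.

Variable nu : {measure set Y -> \bar R}.

Lemma integral_wsum l : nonneg_terms l ->
  \int[nu]_x wsum l x = \sum_(p <- l) p.1%:E * \int[nu]_x p.2 x.
Proof.
elim: l => [_|[c h] l IH hl]; rewrite /wsum.
  by under eq_fun do rewrite big_nil; rewrite big_nil integral0.
have [c0 [h0 mh] /[dup] hl' /nonneg_measurable_wsum[s0 ms]] := nonneg_terms_consE _ _ _ hl.
under eq_fun do rewrite big_cons.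
rewrite big_cons ge0_integralD //=.
- by rewrite ge0_integralZl_EFin // IH.
- by move=> x _; rewrite mule_ge0.
- exact: measurable_funeM.
- by move=> x _; exact: s0.
Qed.

Lemma le_integral_wsum l1 l2 : nonneg_terms l1 -> nonneg_terms l2 ->
  (forall x, wsum l1 x <= wsum l2 x) ->
  \sum_(p <- l1) p.1%:E * \int[nu]_x p.2 x <= \sum_(p <- l2) p.1%:E * \int[nu]_x p.2 x.
Proof.
move=> /[dup] h1 /nonneg_measurable_wsum[p1 m1] /[dup] h2 /nonneg_measurable_wsum[p2 m2] le12.
by rewrite -!integral_wsum //; apply: ge0_le_integral.
Qed.

Lemma nonneg_measurable_integrable h : nonneg_measurable h ->
  \int[nu]_x h x \is a fin_num -> nu.-integrable setT h.
Proof.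
move=> [h0 mh] hfin; apply/integrableP; split => //.
under eq_integral do rewrite gee0_abs //.
by rewrite -ge0_fin_numE // integral_ge0.
Qed.

End weighted_sums.

Section renyi_integrals.
Context {d : measure_display} {Y : measurableType d} {R : realType}.
Local Open Scope ereal_scope.

(* Unlike the KL integrand, this one is nonnegative; it has the same integral when
   int f = int g. *)
Definition kl_shift_integrand (f g : Y -> R) (x : Y) : \bar R :=
  kl_integrand f g x + (g x - f x)%:E.

Variables (nu : {measure set Y -> \bar R}) (f g : Y -> R).
Hypotheses (mf : measurable_fun setT f) (mg : measurable_fun setT g).
Hypotheses (f0 : forall x, (0 <= f x)%R) (g0 : forall x, (0 <= g x)%R).
Hypotheses (intf : \int[nu]_x (f x)%:E = 1) (intg : \int[nu]_x (g x)%:E = 1).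

Local Notation F := (EFin \o f).
Local Notation G := (EFin \o g).
Local Notation H := (kl_shift_integrand f g).
Local Notation RI a := (renyi_integrand a f g).
Let llr x := (ln (f x) - ln (g x))%R.

Variant support_spec x : Prop :=
| SupportF0 of f x = 0%R
| SupportG0 of (0 < f x)%R & g x = 0%R
| SupportPos of (0 < f x)%R & (0 < g x)%R.

Lemma supportP x : support_spec x.
Proof.
have [fx|fx] := eqVneq (f x) 0%R; first exact: SupportF0.
have fpos : (0 < f x)%R by rewrite lt0r fx f0.
have [gx|gx] := eqVneq (g x) 0%R; first exact: SupportG0.
by apply: SupportPos; rewrite // lt0r gx g0.
Qed.

Lemma renyi_integrand_f0 a x : (0 < a)%R -> f x = 0%R -> RI a x = 0.
Proof.
by move=> a0 fx; rewrite /renyi_integrand fx eqxx andbF powR0 ?mul0r ?gt_eqF.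
Qed.

Lemma renyi_integrand_g0 a x : (1 < a)%R -> (0 < f x)%R -> g x = 0%R -> RI a x = +oo.
Proof. by move=> a1 fpos gx; rewrite /renyi_integrand gx eqxx (gt_eqF fpos) a1. Qed.

Lemma renyi_integrand_pos a x : (0 < f x)%R -> (0 < g x)%R ->
  RI a x = (f x * expR ((a - 1) * llr x))%:E.
Proof.
move=> fpos gpos; rewrite /renyi_integrand (gt_eqF gpos) /=; congr EFin.
rewrite /powR (gt_eqF gpos) (gt_eqF fpos) -expRD -[in RHS](lnK fpos) -expRD.
by congr expR; rewrite /llr; ring.
Qed.

Lemma g_expR_llr x : (0 < f x)%R -> (0 < g x)%R -> g x = (f x * expR (- llr x))%R.
Proof.
by move=> fpos gpos; rewrite -[in RHS](lnK fpos) -expRD /llr opprB addrC subrK lnK.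
Qed.

Lemma kl_shift_f0 x : f x = 0%R -> H x = G x.
Proof. by move=> fx; rewrite /kl_shift_integrand /kl_integrand fx eqxx subr0 add0e. Qed.

Lemma kl_shift_g0 x : (0 < f x)%R -> g x = 0%R -> H x = +oo.
Proof. by move=> fpos gx; rewrite /kl_shift_integrand /kl_integrand gx eqxx (gt_eqF fpos). Qed.

Lemma kl_shift_pos x : (0 < f x)%R -> (0 < g x)%R ->
  H x = (f x * (llr x + expR (- llr x) - 1))%:E.
Proof.
move=> fpos gpos.
rewrite /kl_shift_integrand /kl_integrand (gt_eqF gpos) (gt_eqF fpos) ln_div //.
by rewrite -EFinD {2}(g_expR_llr _ fpos gpos) /llr; congr EFin; ring.
Qed.

Lemma nonneg_measurable_f : nonneg_measurable F.
Proof. by split=> [x|]; [rewrite lee_fin | exact/measurable_EFinP]. Qed.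

Lemma nonneg_measurable_g : nonneg_measurable G.
Proof. by split=> [x|]; [rewrite lee_fin | exact/measurable_EFinP]. Qed.

Lemma nonneg_measurable_renyi a : nonneg_measurable (RI a).
Proof.
split=> [x|]; rewrite /renyi_integrand.
  by case: ifP => // _; rewrite lee_fin mulr_ge0 ?powR_ge0.
apply: measurable_fun_ifT.
- apply: measurable_and; first exact: measurable_fun_eqr.
  apply: measurable_and; last exact: measurable_cst.
  by apply: measurable_neg; exact: measurable_fun_eqr.
- exact: measurable_cst.
- apply/measurable_EFinP; apply: measurable_funM.
  + exact: measurableT_comp (measurable_powR _) mf.
  + exact: measurableT_comp (measurable_powR _) mg.
Qed.

Lemma nonneg_measurable_kl_shift : nonneg_measurable H.
Proof.
split=> [x|].
  case: (supportP x) => [fx|fpos gx|fpos gpos].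
  - by rewrite kl_shift_f0 // lee_fin.
  - by rewrite kl_shift_g0.
  - rewrite kl_shift_pos // lee_fin mulr_ge0 ?f0 //.
    by have := expR_ge1Dx (- llr x); lra.
have -> : H = fun x => (if f x == 0%R then 0 else if g x == 0%R then +oo
    else (f x * (ln (f x) - ln (g x)))%:E) + (g x - f x)%:E.
  apply/funext => x; rewrite /kl_shift_integrand /kl_integrand.
  case: (supportP x) => [->|fpos ->|fpos gpos]; rewrite ?eqxx //.
  by rewrite (gt_eqF fpos) (gt_eqF gpos) ln_div.
apply: emeasurable_funD; last by apply/measurable_EFinP; exact: measurable_funB.
apply: measurable_fun_ifT; [exact: measurable_fun_eqr | exact: measurable_cst|].
apply: measurable_fun_ifT; [exact: measurable_fun_eqr | exact: measurable_cst|].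
apply/measurable_EFinP; apply: measurable_funM => //.
by apply: measurable_funB; exact: measurableT_comp (@measurable_ln R) _.
Qed.

Local Hint Resolve nonneg_terms_nil nonneg_measurable_f nonneg_measurable_g : core.
Local Hint Resolve nonneg_measurable_kl_shift nonneg_measurable_renyi : core.

Lemma renyi_integral_ge0 a : 0 <= \int[nu]_x RI a x.
Proof. by apply: integral_ge0 => x _; exact: (nonneg_measurable_renyi a).1. Qed.

Lemma kl_shift_integral_ge0 : 0 <= \int[nu]_x H x.
Proof. by apply: integral_ge0 => x _; exact: nonneg_measurable_kl_shift.1. Qed.

Lemma renyi_integral_ge1 l : (1 < l)%R -> 1 <= \int[nu]_x RI l x.
Proof.
move=> l1; have l0 : (0 < l)%R by apply: lt_trans l1.
have t01 : (0 <= l^-1 <= 1)%R by rewrite invr_ge0 ltW //= invf_le1 // ltW.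
have n1 : nonneg_terms [:: (1%R, F)] by do ![apply: nonneg_terms_consI => //].
have n2 : nonneg_terms [:: (l^-1, RI l); (1 - l^-1, G)]%R.
  by do ![apply: nonneg_terms_consI => //]; lra.
have pw x : wsum [:: (1%R, F)] x <= wsum [:: (l^-1, RI l); (1 - l^-1, G)]%R x.
  case: (supportP x) => [fx|fpos gx|fpos gpos].
  - rewrite {1}/wsum big_cons big_nil /= fx mul1e adde0.
    exact: (nonneg_measurable_wsum _ n2).1.
  - rewrite (wsum_eq_pinfty _ (l^-1)%R (RI l) x n2) ?renyi_integrand_g0 ?invr_gt0 ?leey //.
    by left.
  - rewrite /wsum !big_cons !big_nil /= !adde0 mul1e renyi_integrand_pos //.
    rewrite (g_expR_llr _ fpos gpos) -!EFinM -EFinD lee_fin.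
    have := expR_convex (l^-1)%R ((l - 1) * llr x)%R (- llr x)%R t01.
    rewrite (_ : _ + _ = 0)%R ?expR0 => [ineq|]; last by field; rewrite gt_eqF.
    by apply: (ler_wpM2l_sub (ltW fpos) ineq); ring.
have := le_integral_wsum nu _ _ n1 n2 pw.
rewrite !big_cons !big_nil /= intf intg !adde0 mul1e mule1.
move: (renyi_integral_ge0 l); case: (\int[nu]_x RI l x) => [r _| _ _|//]; last by rewrite leey.
rewrite -EFinM -EFinD !lee_fin => le.
have : (0 < l^-1)%R by rewrite invr_gt0.
nra.
Qed.

Lemma renyi_integral_le_expR a l c : (1 < a <= l)%R ->
  \int[nu]_x RI l x <= (expR ((l - 1) * c))%:E ->
  \int[nu]_x RI a x <= (expR ((a - 1) * c))%:E.
Proof.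
case/andP=> a1 al hl; have l1 : (1 < l)%R by apply: lt_le_trans al.
pose t := ((a - 1) / (l - 1))%R; pose C := ((l - 1) * c)%R.
have t01 : (0 <= t <= 1)%R.
  rewrite /t divr_ge0 ?subr_ge0 ?(ltW a1) ?(ltW l1) //=.
  by rewrite ler_pdivrMr ?subr_gt0 // mul1r lerD2r.
have t0 : (0 < t)%R by rewrite divr_gt0 ?subr_gt0.
pose c1 := ((1 - t) * expR (t * C))%R; pose c2 := (t * expR ((t - 1) * C))%R.
have c1_ge0 : (0 <= c1)%R by rewrite mulr_ge0 ?expR_ge0 // subr_ge0; case/andP: t01.
have c2_gt0 : (0 < c2)%R by rewrite mulr_gt0 ?expR_gt0.
have n1 : nonneg_terms [:: (1%R, RI a)] by do ![apply: nonneg_terms_consI => //].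
have n2 : nonneg_terms [:: (c1, F); (c2, RI l)].
  by do ![apply: nonneg_terms_consI => //]; exact: ltW.
have pw x : wsum [:: (1%R, RI a)] x <= wsum [:: (c1, F); (c2, RI l)] x.
  case: (supportP x) => [fx|fpos gx|fpos gpos].
  - rewrite {1}/wsum big_cons big_nil /= mul1e adde0 renyi_integrand_f0 //.
      exact: (nonneg_measurable_wsum _ n2).1.
    exact: lt_trans a1.
  - by rewrite (wsum_eq_pinfty _ c2 (RI l) x n2) ?renyi_integrand_g0 ?leey //; right; left.
  - rewrite /wsum !big_cons !big_nil /= !adde0 mul1e !renyi_integrand_pos //.
    rewrite -!EFinM -EFinD lee_fin.
    have := expR_convex t ((t - 1) * C + (l - 1) * llr x) (t * C) t01.
    rewrite (_ : t * ((t - 1) * C + (l - 1) * llr x) + (1 - t) * (t * C)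
      = (a - 1) * llr x)%R ?expRD => [ineq|]; last first.
      by rewrite /t; field; rewrite gt_eqF ?subr_gt0.
    by apply: (ler_wpM2l_sub (ltW fpos) ineq); rewrite /c1 /c2; ring.
have := le_integral_wsum nu _ _ n1 n2 pw.
rewrite !big_cons !big_nil /= intf !adde0 mul1e mule1 => /le_trans; apply.
have -> : ((a - 1) * c = t * C)%R by rewrite /t /C; field; rewrite gt_eqF ?subr_gt0.
apply: (@le_trans _ _ (c1%:E + c2%:E * (expR C)%:E)).
  by rewrite leeD2l // lee_wpmul2l // lee_fin ltW.
rewrite -EFinM -EFinD lee_fin /c1 /c2 -mulrA -expRD.
by rewrite (_ : (t - 1) * C + C = t * C)%R ?mulrBl ?mul1r ?subrK //; ring.
Qed.

Lemma kl_shift_integral_fin_num l : (1 < l)%R ->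
  \int[nu]_x RI l x < +oo -> \int[nu]_x H x \is a fin_num.
Proof.
move=> l1 hl; pose P := (l - 1)%R.
have P0 : (0 < P^-1)%R by rewrite invr_gt0 subr_gt0.
have n1 : nonneg_terms [:: (1%R, H)] by do ![apply: nonneg_terms_consI => //].
have n2 : nonneg_terms [:: (P^-1, RI l); (1, G)]%R.
  by do ![apply: nonneg_terms_consI => //]; exact: ltW.
have pw x : wsum [:: (1%R, H)] x <= wsum [:: (P^-1, RI l); (1, G)]%R x.
  case: (supportP x) => [fx|fpos gx|fpos gpos].
  - rewrite /wsum !big_cons !big_nil /= !adde0 !mul1e kl_shift_f0 //.
    by rewrite renyi_integrand_f0 ?mule0 ?add0e // (lt_trans ltr01).
  - by rewrite (wsum_eq_pinfty _ (P^-1)%R (RI l) x n2) ?renyi_integrand_g0 ?leey //; left.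
  - rewrite /wsum !big_cons !big_nil /= !adde0 !mul1e kl_shift_pos //.
    rewrite renyi_integrand_pos // (g_expR_llr _ fpos gpos) -!EFinM -EFinD lee_fin.
    have : (P * llr x <= expR (P * llr x))%R by have := expR_ge1Dx (P * llr x); lra.
    move/(ler_wpM2l (ltW P0)); rewrite mulKf ?gt_eqF ?subr_gt0 // => ineq.
    have {}ineq : (llr x + expR (- llr x) - 1 <= P^-1 * expR (P * llr x) + expR (- llr x))%R.
      by lra.
    by apply: (ler_wpM2l_sub (ltW fpos) ineq); ring.
have := le_integral_wsum nu _ _ n1 n2 pw.
rewrite !big_cons !big_nil /= intg !adde0 !mul1e => le.
rewrite ge0_fin_numE ?kl_shift_integral_ge0 // (le_lt_trans le) //.
rewrite -(fineK (x := \int[nu]_x RI l x)) ?ge0_fin_numE ?renyi_integral_ge0 //.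
by rewrite -EFinM -EFinD ltry.
Qed.

Lemma renyi_div1E : \int[nu]_x H x \is a fin_num -> renyi_div nu f g 1 = \int[nu]_x H x.
Proof.
move=> Hfin; rewrite /renyi_div eqxx.
have iF : nu.-integrable setT F.
  by apply: nonneg_measurable_integrable nonneg_measurable_f _; rewrite intf.
have iG : nu.-integrable setT G.
  by apply: nonneg_measurable_integrable nonneg_measurable_g _; rewrite intg.
have iH := nonneg_measurable_integrable nu _ nonneg_measurable_kl_shift Hfin.
have -> : kl_integrand f g = fun x => H x + ((f x)%:E - (g x)%:E).
  apply/funext => x; rewrite /kl_shift_integrand -addeA -EFinB -EFinD.
  by rewrite (_ : g x - f x + (f x - g x) = 0)%R ?adde0 //; ring.
rewrite integralD //; last exact: integrableB.
by rewrite integralB_EFin // intf intg subee // adde0.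
Qed.

Lemma expR_kl_le_renyi_integral a k : (1 < a)%R -> \int[nu]_x H x = k%:E ->
  (expR ((a - 1) * k))%:E <= \int[nu]_x RI a x.
Proof.
move=> a1 Hk; pose E := expR ((a - 1) * k).
have s0 : (0 < a - 1)%R by rewrite subr_gt0.
have k0 : (0 <= k)%R by rewrite -lee_fin -Hk kl_shift_integral_ge0.
have Es0 : (0 <= E * (a - 1))%R by rewrite mulr_ge0 ?expR_ge0 ?ltW.
have n1 : nonneg_terms [:: (E + E * (a - 1), F); (E * (a - 1), H)]%R.
  by do ![apply: nonneg_terms_consI => //]; rewrite addr_ge0 ?expR_ge0.
have n2 : nonneg_terms [:: (1, RI a); (E * (a - 1) * k, F); (E * (a - 1), G)]%R.
  by do ![apply: nonneg_terms_consI => //]; rewrite mulr_ge0.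
have pw x : wsum [:: (E + E * (a - 1), F); (E * (a - 1), H)]%R x <=
            wsum [:: (1, RI a); (E * (a - 1) * k, F); (E * (a - 1), G)]%R x.
  case: (supportP x) => [fx|fpos gx|fpos gpos].
  - rewrite /wsum !big_cons !big_nil /= !adde0 fx kl_shift_f0 //.
    by rewrite renyi_integrand_f0 ?(lt_trans ltr01) // !mule0 !add0e.
  - by rewrite (wsum_eq_pinfty _ 1%R (RI a) x n2) ?renyi_integrand_g0 ?leey //; left.
  - rewrite /wsum !big_cons !big_nil /= !adde0 mul1e kl_shift_pos //.
    rewrite renyi_integrand_pos // (g_expR_llr _ fpos gpos) -!EFinM -!EFinD lee_fin.
    have ineq : (E * (1 + ((a - 1) * llr x - (a - 1) * k)) <= expR ((a - 1) * llr x))%R.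
      rewrite (_ : expR ((a - 1) * llr x) = E * expR ((a - 1) * llr x - (a - 1) * k))%R.
        by rewrite ler_wpM2l ?expR_ge0 ?expR_ge1Dx.
      by rewrite -expRD; congr expR; ring.
    by apply: (ler_wpM2l_sub (ltW fpos) ineq); ring.
have := le_integral_wsum nu _ _ n1 n2 pw.
rewrite !big_cons !big_nil /= intf intg Hk !adde0 mul1e !mule1.
move: (renyi_integral_ge0 a); case: (\int[nu]_x RI a x) => [b _| _ _|//].
  by rewrite -/E -!EFinM -!EFinD !lee_fin; lra.
by rewrite leey.
Qed.

Lemma renyi_integral_le_kl a v k B : (1 < a)%R -> (0 < v)%R ->
  \int[nu]_x H x = k%:E -> \int[nu]_x RI (a + v) x <= B%:E ->
  \int[nu]_x RI a x <= (1 + (a - 1) * k + (2 * (a - 1) ^+ 2 / expR 2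
                         + (a - 1) ^+ 2 / 2 * (2 / (v * expR 1)) ^+ 2 * B))%:E.
Proof.
move=> a1 v0 Hk hB.
pose c1 := (2 * (a - 1) ^+ 2 / expR 2)%R.
pose C := ((a - 1) ^+ 2 / 2 * (2 / (v * expR 1)) ^+ 2)%R.
have s0 : (0 < a - 1)%R by rewrite subr_gt0.
have c10 : (0 <= c1)%R by rewrite /c1 !mulr_ge0 ?invr_ge0 ?expR_ge0 ?(ltW s0).
have C0 : (0 <= C)%R by rewrite /C mulr_ge0 ?sqr_ge0 // divr_ge0 ?sqr_ge0.
have n1 : nonneg_terms [:: (1, RI a); (a - 1, G)]%R.
  by do ![apply: nonneg_terms_consI => //]; exact: ltW.
have n2 : nonneg_terms [:: (a, F); (a - 1, H); (c1, G); (C, RI (a + v))]%R.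
  by do ![apply: nonneg_terms_consI => //]; apply: ltW => //; apply: lt_trans a1.
have pw x : wsum [:: (1, RI a); (a - 1, G)]%R x <=
            wsum [:: (a, F); (a - 1, H); (c1, G); (C, RI (a + v))]%R x.
  case: (supportP x) => [fx|fpos gx|fpos gpos].
  - rewrite /wsum !big_cons !big_nil /= !adde0 fx kl_shift_f0 //.
    rewrite !renyi_integrand_f0 ?addr_gt0 ?(lt_trans ltr01 a1) //.
    rewrite !mule0 !add0e adde0 -!EFinM -EFinD lee_fin lerDl.
    by rewrite mulr_ge0.
  - by rewrite (wsum_eq_pinfty _ (a - 1)%R H x n2) ?kl_shift_g0 ?leey //; right; left.
  - rewrite /wsum !big_cons !big_nil /= !adde0 mul1e kl_shift_pos //.
    rewrite !renyi_integrand_pos // (g_expR_llr _ fpos gpos) -!EFinM -!EFinD lee_fin.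
    have := expR_tangent_gap_le (a - 1)%R v (llr x) (ltW s0) v0.
    rewrite (_ : a - 1 + v = a + v - 1)%R => [ineq|]; last by ring.
    by apply: (ler_wpM2l_sub (ltW fpos) ineq); rewrite /c1 /C; ring.
have := le_integral_wsum nu _ _ n1 n2 pw.
rewrite !big_cons !big_nil /= intf intg Hk !adde0 mul1e !mule1 => le.
have CB : C%:E * \int[nu]_x RI (a + v) x <= (C * B)%:E by rewrite EFinM lee_wpmul2l.
move: (le_trans le (leeD2l _ (leeD2l _ (leeD2l _ CB)))).
move: (renyi_integral_ge0 a); case: (\int[nu]_x RI a x) => [b _| _|//].
  by rewrite -!EFinM -!EFinD !lee_fin /c1 /C; lra.
by rewrite addye.
Qed.

Lemma renyi_integral_le_of_renyi_div l c : (1 < l)%R ->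
  renyi_div nu f g l <= c%:E -> \int[nu]_x RI l x <= (expR ((l - 1) * c))%:E.
Proof.
move=> l1; rewrite /renyi_div (gt_eqF l1).
have s0 : (0 < (l - 1)^-1)%R by rewrite invr_gt0 subr_gt0.
move: (renyi_integral_ge1 _ l1); case: (\int[nu]_x RI l x) => [r r1| _|//].
  rewrite /eln gt_eqF ?(lt_le_trans ltr01) // -EFinM !lee_fin => h.
  rewrite -ler_ln ?posrE ?expR_gt0 ?(lt_le_trans ltr01) // expRK.
  by rewrite -ler_pdivrMl ?subr_gt0.
by rewrite /= gt0_muley ?lte_fin.
Qed.

Lemma renyi_integral_le_gap_bound gamma lambda eta k : (0 <= gamma)%R ->
  (1 < eta < lambda)%R -> \int[nu]_x RI lambda x <= (expR ((lambda - 1) * gamma))%:E ->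
  \int[nu]_x H x = k%:E ->
  \int[nu]_x RI eta x <= (1 + (eta - 1) * (k + renyi_gap_bound gamma lambda eta))%:E.
Proof.
move=> gamma0 /andP[eta1 etal] hRl Hk.
have s0 : (0 < eta - 1)%R by rewrite subr_gt0.
have k0 : (0 <= k)%R by rewrite -lee_fin -Hk kl_shift_integral_ge0.
have rho0 := renyi_gap_bound_ge0 gamma lambda _ (ltW eta1).
have [gamma_eq0|gamma_gt0] := eqVneq gamma 0%R.
  apply: (le_trans (renyi_integral_le_expR _ _ _ _ hRl)); first by rewrite eta1 (ltW etal).
  have := mulr_ge0 (ltW s0) (addr_ge0 k0 rho0).
  by rewrite gamma_eq0 mulr0 expR0 lee_fin; lra.
rewrite /renyi_gap_bound; set tau := Num.min _ _.
have gamma_pos : (0 < gamma)%R by rewrite lt0r gamma_gt0.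
have tau0 : (0 < tau)%R by rewrite lt_min ltr01 andbT divr_gt0 // mulr_gt0 // subr_gt0.
have tau_le : (tau <= (lambda - eta) * gamma / 2)%R by rewrite ge_min lexx.
(* v is chosen so that v gamma = 2 tau and eta + v <= lambda *)
pose v := (2 * tau / gamma)%R.
have v0 : (0 < v)%R by rewrite divr_gt0 // mulr_gt0.
have hv : (1 < eta + v <= lambda)%R.
  have : (v <= lambda - eta)%R by rewrite /v ler_pdivrMr //; lra.
  by move=> ?; apply/andP; split; lra.
have hRv := renyi_integral_le_expR _ _ _ hv hRl.
apply: (le_trans (renyi_integral_le_kl _ _ _ _ eta1 v0 Hk hRv)); rewrite lee_fin.
have ev : (expR ((eta + v - 1) * gamma) = expR ((eta - 1) * gamma) * expR tau ^+ 2)%R.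
  by rewrite -expRM_natr -expRD; congr expR; rewrite /v; field; rewrite gt_eqF.
have e2 : (expR 2 = expR 1 ^+ 2 :> R)%R by rewrite -expRM_natr mul1r.
rewrite ev e2 /v le_eqVlt; apply/orP; left; apply/eqP.
by field; rewrite !gt_eqF ?expR_gt0.
Qed.

Lemma renyi_div_sub_kl_bounds gamma lambda eta : (0 <= gamma)%R ->
  (1 < eta < lambda)%R -> renyi_div nu f g lambda <= gamma%:E ->
  0 <= renyi_div nu f g eta - renyi_div nu f g 1 /\
  renyi_div nu f g eta - renyi_div nu f g 1 <= (renyi_gap_bound gamma lambda eta)%:E.
Proof.
move=> gamma0 /[dup] heta /andP[eta1 etal] hD; have l1 := lt_trans eta1 etal.
have hRl := renyi_integral_le_of_renyi_div _ _ l1 hD.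
have Hfin := kl_shift_integral_fin_num _ l1 (le_lt_trans hRl (ltry _)).
set k := fine (\int[nu]_x H x); have Hk : \int[nu]_x H x = k%:E by rewrite fineK.
have hb := renyi_integral_le_gap_bound _ _ _ _ gamma0 heta hRl Hk.
have Rfin : \int[nu]_x RI eta x \is a fin_num.
  by rewrite ge0_fin_numE ?renyi_integral_ge0 ?(le_lt_trans hb) ?ltry.
set b := fine (\int[nu]_x RI eta x).
have Rb : \int[nu]_x RI eta x = b%:E by rewrite fineK.
have Eb := expR_kl_le_renyi_integral _ _ eta1 Hk.
rewrite Rb lee_fin in Eb; rewrite Rb lee_fin in hb.
have b0 : (0 < b)%R := lt_le_trans (expR_gt0 _) Eb.
have s0 : (0 < eta - 1)%R by rewrite subr_gt0.
rewrite renyi_div1E // Hk /renyi_div (gt_eqF eta1) Rb /eln (gt_eqF b0).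
rewrite -EFinM -EFinB !lee_fin; split.
  by rewrite subr_ge0 ler_pdivlMl // -ler_expR lnK ?posrE.
have lnb : (ln b <= b - 1)%R.
  by have := @le_ln1Dx _ (b - 1); rewrite addrCA subrr addr0; apply; lra.
have : ((eta - 1)^-1 * ln b <= k + renyi_gap_bound gamma lambda eta)%R.
  by rewrite ler_pdivrMl //; lra.
lra.
Qed.

End renyi_integrals.

Local Open Scope ereal_scope.

Theorem lemma26 (d : measure_display) (Y : measurableType d) (R : realType)
  (w q nu : probability Y R) (f g : Y -> R)
  (hf : is_density w nu f) (hg : is_density q nu g)
  (gamma lambda eta : R)
  (hgamma : (0 <= gamma)%R) (hlambda : (1 < lambda)%R)
  (hD : renyi_div nu f g lambda <= gamma%:E)
  (heta : (1 < eta < lambda)%R) :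
  let tau := Num.min (((lambda - eta) * gamma) / 2)%R 1%R in
  0 <= renyi_div nu f g eta - renyi_div nu f g 1 /\
  renyi_div nu f g eta - renyi_div nu f g 1 <=
    ((2 * (eta - 1)) / expR 2 *
     (1 + expR ((eta - 1) * gamma) * ((gamma * expR tau) / (2 * tau)) ^+ 2))%:E.
Proof.
case: hf => mf f0 fA; case: hg => mg g0 gA.
have intf : \int[nu]_x (f x)%:E = 1 by rewrite -fA //; apply: probability_setT.
have intg : \int[nu]_x (g x)%:E = 1 by rewrite -gA //; apply: probability_setT.
exact: (renyi_div_sub_kl_bounds _ _ _ mf mg f0 g0 intf intg _ _ _ hgamma heta hD).
Qed.
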